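(* Let $\alpha,\beta>0$. The Tversky dissimilarity $d^T_{\alpha,\beta}$ is a metric on the collection of all finite subsets of $\mathbb N$ if and only if $\alpha=\beta\ge 1$.
   Context: For finite sets $X,Y$ and parameters $\alpha,\beta>0$, the Tversky index is $S(X,Y)=\dfrac{|X\cap Y|}{|X\cap Y|+\alpha|X\setminus Y|+\beta|Y\setminus X|}$, and the Tversky dissimilarity is $d^T_{\alpha,\beta}(X,Y)=1-S(X,Y)$ if $X\cup Y\ne\emptyset$ and $d^T_{\alpha,\beta}(\emptyset,\emptyset)=0$. A metric satisfies nonnegativity, $d(x,y)=0$ iff $x=y$, symmetry, and the triangle inequality. *)

(* finite subsets of nat as {fset nat} (finmap), scalars in an
   arbitrary real field R (the statement is purely algebraic). *)
From HB Require Import structures.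
From mathcomp Require Import all_boot all_order all_algebra.
From mathcomp Require Import finmap.
Set Implicit Arguments. Unset Strict Implicit. Unset Printing Implicit Defensive.
Import Order.TTheory GRing.Theory Num.Theory.
Local Open Scope fset_scope.
Local Open Scope ring_scope.

Definition tversky_index (R : realFieldType) (a b : R) (X Y : {fset nat}) : R :=
  (#|` X `&` Y|)%:R /
  ((#|` X `&` Y|)%:R + a * (#|` X `\` Y|)%:R + b * (#|` Y `\` X|)%:R).

Definition tversky_dist (R : realFieldType) (a b : R) (X Y : {fset nat}) : R :=
  if X `|` Y == fset0 then 0 else 1 - tversky_index a b X Y.

Definition is_metric (R : realFieldType) (T : Type) (d : T -> T -> R) : Prop :=
  [/\ (forall x y, 0 <= d x y),
      (forall x y, d x y = 0 <-> x = y),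
      (forall x y, d x y = d y x)
    & (forall x y z, d x z <= d x y + d y z)].

(** If [a = b], the Tversky dissimilarity is [phi_a (J X Y)], where [J] is the
    Jaccard distance [|X Δ Y| / |X ∪ Y|] and [phi_a t = a t / (1 + (a - 1) t)].
    The Jaccard distance satisfies the triangle inequality, and for [a >= 1]
    the map [phi_a] is nondecreasing and subadditive on [[0, +oo)], so the
    triangle inequality transfers.  Conversely, on [X = {0}], [Y = {0, 1}],
    [Z = {1}] we get [d(X,Y) = b/(1+b)], [d(Y,X) = d(Y,Z) = a/(1+a)] and
    [d(X,Z) = 1]: symmetry forces [a = b], and the triangle inequality
    [d(X,Z) <= d(X,Y) + d(Y,Z)] forces [a >= 1]. *)
From HB Require Import structures.
From mathcomp Require Import all_boot all_order all_algebra.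
From mathcomp Require Import finmap.
From mathcomp Require Import ring lra.
Import Order.TTheory GRing.Theory Num.Theory.
Local Open Scope fset_scope.
Local Open Scope ring_scope.

Definition hamming (X Y : {fset nat}) : nat := (#|` X `\` Y| + #|` Y `\` X|)%N.

Definition jaccard_dist (R : realFieldType) (X Y : {fset nat}) : R :=
  (hamming X Y)%:R / (#|` X `|` Y|)%:R.

Definition tversky_phi {R : realFieldType} (a t : R) : R := a * t / (1 + (a - 1) * t).

Lemma card_fset_sum (U A : {fset nat}) : A `<=` U ->
  #|` A| = (\sum_(i <- U) (i \in A))%N.
Proof.
move=> sAU; rewrite card_fset_sum1.
rewrite (@eq_big_seq _ _ _ _ _ _ (fun i => nat_of_bool (i \in A))); last by move=> x /= ->.
by apply: big_fset_incl => // x _ /negbTE ->.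
Qed.

(* Reduces a cardinality (in)equality between Boolean combinations of sets
   inside [U] to a pointwise truth-table check. *)
Ltac case_mem := repeat match goal with |- context[?x \in ?S] => case: (x \in S) end.
Ltac card_by_indicators U :=
  rewrite !(@card_fset_sum U); try by apply/fsubsetP => ?; rewrite !inE; case_mem.

Section Cardinalities.
Variables X Y Z : {fset nat}.

Lemma card_fsetU_hamming : #|` X `|` Y| = (#|` X `&` Y| + hamming X Y)%N.
Proof.
rewrite /hamming; card_by_indicators (X `|` Y).
by rewrite -!big_split; apply: eq_big_seq => ? _; rewrite !inE; case_mem.
Qed.

Lemma card_fsetU3 : (#|` X `|` Z| + #|` Y `\` (X `|` Z)|)%N = #|` X `|` Y `|` Z|.
Proof.
card_by_indicators (X `|` Y `|` Z).
by rewrite -!big_split; apply: eq_big_seq => ? _; rewrite !inE; case_mem.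
Qed.

Lemma hamming_triangle :
  (hamming X Z + #|` Y `\` (X `|` Z)| <= hamming X Y + hamming Y Z)%N.
Proof.
rewrite /hamming; card_by_indicators (X `|` Y `|` Z).
by rewrite -!big_split; apply: leq_sum => ? _; rewrite !inE; case_mem.
Qed.

End Cardinalities.

Lemma hamming_eq0 (X Y : {fset nat}) : hamming X Y = 0%N -> X = Y.
Proof.
move/eqP; rewrite addn_eq0 !cardfs_eq0 !fsetD_eq0 => /andP[sXY sYX].
by apply/eqP; rewrite eqEfsubset sXY sYX.
Qed.

Section Fractions.
Variable R : realFieldType.
Implicit Types p q r m : R.

Lemma ler_fracD p q m : 0 <= p <= q -> 0 <= m -> p / q <= (p + m) / (q + m).
Proof.
move=> /andP[p0 pq] m0; have [q0|q0] : q = 0 \/ 0 < q by lra.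
  have -> : p = 0 by lra.
  by rewrite mul0r divr_ge0 //; lra.
rewrite ler_pdivrMr // mulrAC ler_pdivlMr; nra.
Qed.

Lemma ler_frac_den p q r : 0 <= p <= q -> q <= r -> p / r <= p / q.
Proof.
move=> /andP[p0 pq] qr; have [q0|q0] : q = 0 \/ 0 < q by lra.
  have -> : p = 0 by lra.
  by rewrite !mul0r.
by rewrite ler_wpM2l // lef_pV2 ?posrE //; lra.
Qed.

End Fractions.

Section Jaccard.
Variable R : realFieldType.
Implicit Types X Y Z : {fset nat}.

Lemma hamming_le_cardU X Y : (hamming X Y <= #|` X `|` Y|)%N.
Proof. by rewrite card_fsetU_hamming leq_addl. Qed.

Lemma jaccard_dist_ge0 X Y : 0 <= jaccard_dist R X Y.
Proof. exact: divr_ge0. Qed.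

Lemma jaccard_dist_eq0 X Y : jaccard_dist R X Y = 0 -> X = Y.
Proof.
move/eqP; rewrite mulf_eq0 invr_eq0 !pnatr_eq0 => /orP[/eqP|/eqP n0].
  exact: hamming_eq0.
by apply: hamming_eq0; apply/eqP; rewrite -leqn0 -n0 hamming_le_cardU.
Qed.

Lemma jaccard_distC X Y : jaccard_dist R X Y = jaccard_dist R Y X.
Proof. by rewrite /jaccard_dist /hamming addnC fsetUC. Qed.

(* Adding the points of [Y] outside [X ∪ Z] to both sides of the fraction
   passes to the common denominator [|X ∪ Y ∪ Z|]. *)
Lemma jaccard_dist_triangle X Y Z :
  jaccard_dist R X Z <= jaccard_dist R X Y + jaccard_dist R Y Z.
Proof.
set m := #|` Y `\` (X `|` Z)|; set n := #|` X `|` Y `|` Z|.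
have shrink_den X' Y' : (#|` X' `|` Y'| <= n)%N ->
    (hamming X' Y')%:R / n%:R <= jaccard_dist R X' Y'.
  by move=> le_n; apply: ler_frac_den; rewrite ?ler0n ?ler_nat ?hamming_le_cardU.
apply: (@le_trans _ _ ((hamming X Z + m)%N%:R / n%:R : R)).
  rewrite /jaccard_dist /n /m -card_fsetU3 [(hamming X Z + _)%:R]natrD.
  rewrite [(#|` X `|` Z| + _)%:R]natrD.
  by apply: ler_fracD; rewrite // ler0n ler_nat hamming_le_cardU.
apply: (@le_trans _ _ ((hamming X Y)%:R / n%:R + (hamming Y Z)%:R / n%:R : R)).
  rewrite -mulrDl -natrD ler_wpM2r ?invr_ge0 // ler_nat; exact: hamming_triangle.
apply: lerD; apply: shrink_den => //; apply: fsubset_leq_card.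
  exact: fsubsetUl.
by rewrite -fsetUA fsubsetUr.
Qed.

End Jaccard.

Section TverskyPhi.
Context {R : realFieldType} {a : R}.
Hypothesis a_ge1 : 1 <= a.
Implicit Types s t : R.
Local Notation phi := (tversky_phi a).

Lemma tversky_phi_den_gt0 t : 0 <= t -> 0 < 1 + (a - 1) * t.
Proof.
move=> t0; have : 0 <= (a - 1) * t by rewrite mulr_ge0 // subr_ge0.
lra.
Qed.

Lemma tversky_phi_ge0 t : 0 <= t -> 0 <= phi t.
Proof.
move=> t0; have den0 := tversky_phi_den_gt0 _ t0.
by rewrite /tversky_phi divr_ge0 ?mulr_ge0 ?(ltW den0) // (le_trans ler01 a_ge1).
Qed.

Lemma tversky_phi_eq0 t : 0 <= t -> phi t = 0 -> t = 0.
Proof.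
move=> t0 /eqP; rewrite /tversky_phi mulf_eq0 invr_eq0 mulf_eq0.
have /lt0r_neq0/negbTE -> := tversky_phi_den_gt0 _ t0.
have /lt0r_neq0/negbTE -> : 0 < a by move: a_ge1; lra.
by rewrite orbF /= => /eqP.
Qed.

Lemma tversky_phi_le s t : 0 <= s <= t -> phi s <= phi t.
Proof.
move=> /andP[s0 st]; have t0 := le_trans s0 st.
rewrite /tversky_phi ler_pdivrMr ?tversky_phi_den_gt0 // mulrAC.
rewrite ler_pdivlMr ?tversky_phi_den_gt0 //.
have -> : a * s * (1 + (a - 1) * t) = a * s + (a - 1) * a * s * t by ring.
have -> : a * t * (1 + (a - 1) * s) = a * t + (a - 1) * a * s * t by ring.
by rewrite lerD2r ler_wpM2l //; move: a_ge1; lra.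
Qed.

(* Each summand only loses by dropping the other variable from its denominator. *)
Lemma tversky_phi_subadd s t : 0 <= s -> 0 <= t -> phi (s + t) <= phi s + phi t.
Proof.
move=> s0 t0; have a0 : 0 <= a by move: a_ge1; lra.
rewrite /tversky_phi mulrDr mulrDl.
by apply: lerD; apply: ler_wpM2l; rewrite ?mulr_ge0 // lef_pV2 ?posrE
  ?tversky_phi_den_gt0 ?addr_ge0 // lerD2l ler_wpM2l ?subr_ge0 // ?lerDl ?lerDr.
Qed.

End TverskyPhi.

Lemma tversky_distE (R : realFieldType) (a : R) (X Y : {fset nat}) : 0 < a ->
  tversky_dist a a X Y = tversky_phi a (jaccard_dist R X Y).
Proof.
move=> a0; rewrite /tversky_dist /tversky_index /jaccard_dist /tversky_phi.
case: ifP => [/eqP->|XY0]; first by rewrite cardfs0 invr0 !(mulr0, mul0r).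
have n_gt0 : (0 < #|` X `|` Y|)%N by rewrite cardfs_gt0 XY0.
rewrite card_fsetU_hamming /hamming -(ltr0n R) in n_gt0 *.
rewrite !natrD in n_gt0 *.
have := ler0n R #|` X `&` Y|; have := ler0n R #|` X `\` Y|; have := ler0n R #|` Y `\` X|.
move: (#|` X `&` Y|%:R) (#|` X `\` Y|%:R) (#|` Y `\` X|%:R) n_gt0 => i p q n0 q0 p0 i0.
have den0 : 0 < i + a * p + a * q by have := mulr_ge0 (ltW a0) (addr_ge0 p0 q0); nra.
by field; rewrite !lt0r_neq0 //; nra.
Qed.

Lemma tversky_dist_is_metric (R : realFieldType) (a : R) : 1 <= a ->
  is_metric (tversky_dist a a).
Proof.
move=> a_ge1; have a_gt0 : 0 < a by lra.
split=> [X Y | X Y | X Y | X Y Z]; rewrite ?tversky_distE //.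
- exact/tversky_phi_ge0/jaccard_dist_ge0.
- split=> [|->].
    by move/(tversky_phi_eq0 a_ge1 _ (jaccard_dist_ge0 _ _ _))/jaccard_dist_eq0.
  by rewrite /jaccard_dist /hamming fsetDv cardfs0 /tversky_phi !(mul0r, mulr0).
- by rewrite jaccard_distC.
have J_ge0 := jaccard_dist_ge0 R.
apply: le_trans (tversky_phi_subadd a_ge1 _ _ (J_ge0 X Y) (J_ge0 Y Z)).
by rewrite tversky_phi_le // jaccard_dist_ge0 jaccard_dist_triangle.
Qed.

Lemma mem_fsetU_eq0F (x : nat) (A B : {fset nat}) : x \in A -> (A `|` B == fset0) = false.
Proof. by move=> xA; apply/negbTE/fset0Pn; exists x; rewrite inE xA. Qed.

Section TverskyOnSmallSets.
Variables (R : realFieldType) (a b : R) (x y : nat).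
Hypothesis xy : x != y.

Ltac solve_fset := apply/fsetP => ?; rewrite !inE;
  case: eqP => [->|]; rewrite ?eqxx ?(negbTE xy) //=; case: eqP.

Lemma tversky_dist_fset1_fset2 : tversky_dist a b [fset x] [fset x; y] = 1 - (1 + b)^-1.
Proof.
rewrite /tversky_dist (@mem_fsetU_eq0F x) ?inE ?eqxx // /tversky_index.
have -> : [fset x] `&` [fset x; y] = [fset x] by solve_fset.
have -> : [fset x] `\` [fset x; y] = fset0 by solve_fset.
have -> : [fset x; y] `\` [fset x] = [fset y] by solve_fset.
by rewrite cardfs0 !cardfs1 !(mulr0, addr0, mulr1, div1r).
Qed.

Lemma tversky_dist_fset2_fset1 : tversky_dist a b [fset x; y] [fset x] = 1 - (1 + a)^-1.
Proof.
rewrite /tversky_dist (@mem_fsetU_eq0F x) ?inE ?eqxx // /tversky_index.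
have -> : [fset x; y] `&` [fset x] = [fset x] by solve_fset.
have -> : [fset x] `\` [fset x; y] = fset0 by solve_fset.
have -> : [fset x; y] `\` [fset x] = [fset y] by solve_fset.
by rewrite cardfs0 !cardfs1 !(mulr0, addr0, mulr1, div1r).
Qed.

Lemma tversky_dist_fset1_fset1 : tversky_dist a b [fset x] [fset y] = 1.
Proof.
rewrite /tversky_dist (@mem_fsetU_eq0F x) ?inE ?eqxx // /tversky_index.
have -> : [fset x] `&` [fset y] = fset0 by solve_fset.
by rewrite cardfs0 !mul0r subr0.
Qed.

End TverskyOnSmallSets.

Theorem mainTheorem2 (R : realFieldType) (a b : R) (ha : 0 < a) (hb : 0 < b) :
  is_metric (tversky_dist a b) <-> (a = b /\ 1 <= a).
Proof.
split=> [[_ _ dC dT] | [<- a_ge1]]; last exact: tversky_dist_is_metric.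
have ab : a = b.
  move: (dC [fset 0] [fset 0; 1]).
  rewrite tversky_dist_fset1_fset2 // tversky_dist_fset2_fset1 //.
  by move/addrI/oppr_inj/invr_inj/addrI.
split=> //; move: (dT [fset 0] [fset 0; 1] [fset 1]).
rewrite tversky_dist_fset1_fset1 // tversky_dist_fset1_fset2 // fsetUC.
rewrite tversky_dist_fset2_fset1 // -ab.
have : (1 + a)^-1 * (1 + a) = 1 by rewrite mulVf //; apply/lt0r_neq0; lra.
set t := (1 + a)^-1; nra.
Qed.
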